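(* Let $\mathbf t:\mathcal D\to\mathcal T$ be a refinement system. For every $Q\sqsubset B$, the presheaf $Q^{+}$ on $B^{+}$ is representable, represented by the object $(Q,\mathrm{id}_B)\in B^{+}$: there is a natural isomorphism $Q^{+}\cong B^{+}(-,(Q,\mathrm{id}_B))$. Moreover, under these isomorphisms and the Yoneda lemma, for every derivation $\alpha$ of $P\Rightarrow_cQ$ (with $c:A\to B$, $P\sqsubset A$), the natural transformation $\theta_\alpha:P^{+}\Rightarrow Q^{+}\circ(c^{+})^{op}$ corresponds to the morphism $c^{+}(P,\mathrm{id}_A)=(P,c)\to(Q,\mathrm{id}_B)$ of $B^{+}$ given by $\alpha$; that is, the positive representation $\mathbf t\to\mathbf{upc}$ factors as the morphism $\mathbf t\to\mathbf{obc}$ sending $B\mapsto B^{+}$ and $Q\mapsto(B^{+},(Q,\mathrm{id}_B))$, followed by the Yoneda embedding $\mathbf{obc}\to\mathbf{upc}$, $(\mathcal A,a)\mapsto(\mathcal A,\mathcal A(-,a))$.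
   Context: A refinement system is a functor $\mathbf{t}:\mathcal{D}\to\mathcal{T}$; composition is diagrammatic. Write $P\sqsubset A$ if $\mathbf t(P)=A$; a derivation of $P\Rightarrow_cQ$ is a morphism $\alpha:P\to Q$ with $\mathbf t(\alpha)=c$. For $B\in\mathcal T$, $B^{+}$ is the category with objects $(P,c)$, $P\sqsubset A$, $c:A\to B$, and morphisms $(P_1,c_1)\to(P_2,c_2)$ the derivations of $P_1\Rightarrow_eP_2$ with $c_1=e;c_2$. For $c:A\to B$, $c^{+}:A^{+}\to B^{+}$ sends $(P,e)\mapsto(P,e;c)$, identity on derivations. For $Q\sqsubset B$, $Q^{+}:(B^{+})^{op}\to\mathbf{Set}$ sends $(P,c)$ to the set of derivations of $P\Rightarrow_cQ$, acting on a morphism $\alpha$ by $\beta\mapsto\alpha;\beta$. For a derivation $\alpha$ of $P\Rightarrow_cQ$, $\theta_\alpha$ has component at $(P',e)$ given by $\beta\mapsto\beta;\alpha$. $\mathbf{upc}:\mathbf{Psh}\to\mathbf{Cat}$ is the forgetful functor from pairs (category, presheaf on it), with morphisms $(F,\theta:\phi\Rightarrow\psi\circ F^{op})$. $\mathbf{obc}:\mathbf{Cat}_\bullet\to\mathbf{Cat}$ is the forgetful functor from the category of pointed categories $(\mathcal A,a)$, whose morphisms $(\mathcal A,a)\to(\mathcal B,b)$ are pairs $(F,h)$ with $F:\mathcal A\to\mathcal B$ a functor and $h:Fa\to b$ in $\mathcal B$; the Yoneda embedding sends $(F,h)$ to $(F,\theta)$ with $\theta_x:\mathcal A(x,a)\to\mathcal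 B(Fx,b)$, $g\mapsto Fg;h$. *)

From Stdlib Require Import ProofIrrelevance.

Unset Implicit Arguments.


(* Categories, composition written diagrammatically: comp f g = f ; g. *)
Record Category := {
  Ob :> Type;
  Hom : Ob -> Ob -> Type;
  idm : forall a, Hom a a;
  comp : forall a b c, Hom a b -> Hom b c -> Hom a c;
  comp_id_l : forall a b (f : Hom a b), comp a a b (idm a) f = f;
  comp_id_r : forall a b (f : Hom a b), comp a b b f (idm b) = f;
  comp_assoc : forall a b c d (f : Hom a b) (g : Hom b c) (h : Hom c d),
      comp a c d (comp a b c f g) h = comp a b d f (comp b c d g h)
}.
Arguments Hom {C} : rename.
Arguments idm {C} : rename.
Arguments comp {C a b c} : rename.
Arguments comp_id_l {C a b} : rename.
Arguments comp_id_r {C a b} : rename.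
Arguments comp_assoc {C a b c d} : rename.

Record Functor (C E : Category) := {
  fobj :> Ob C -> Ob E;
  fmap : forall a b, Hom a b -> Hom (fobj a) (fobj b);
  fmap_id : forall a, fmap a a (idm a) = idm (fobj a);
  fmap_comp : forall a b c (f : Hom a b) (g : Hom b c),
      fmap a c (comp f g) = comp (fmap a b f) (fmap b c g)
}.
Arguments fmap {C E} F {a b} : rename.
Arguments fobj {C E} F : rename.
Arguments fmap_id {C E} F a : rename.
Arguments fmap_comp {C E} F {a b c} : rename.

Record Presheaf (C : Category) := {
  pob :> Ob C -> Type;
  pmap : forall x y, Hom x y -> pob y -> pob x;
  pmap_id : forall x (s : pob x), pmap x x (idm x) s = s;
  pmap_comp : forall x y z (f : Hom x y) (g : Hom y z) (s : pob z),
      pmap x z (comp f g) s = pmap x y f (pmap y z g s)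
}.
Arguments pmap {C} F {x y} : rename.
Arguments pob {C} F : rename.

Record NatIso (C : Category) (F G : Presheaf C) := {
  fwd : forall x, F x -> G x;
  bwd : forall x, G x -> F x;
  fwd_bwd : forall x (s : G x), fwd x (bwd x s) = s;
  bwd_fwd : forall x (s : F x), bwd x (fwd x s) = s;
  fwd_nat : forall x y (f : Hom x y) (s : F y),
      fwd x (pmap F f s) = pmap G f (fwd y s)
}.
Arguments NatIso {C} F G.
Arguments fwd {C F G} n x : rename.
Arguments bwd {C F G} n x : rename.

Definition yon {C : Category} (a : Ob C) : Presheaf C.
Proof.
  refine {| pob := fun x => Hom x a;
            pmap := fun x y (f : Hom x y) (s : Hom y a) => comp f s |}.
  - intros; apply comp_id_l.
  - intros; apply comp_assoc.
Defined.

(* Yoneda embedding on morphisms of pointed categories (F, h):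
   theta_x : A(x, a) -> B(F x, b),  g |-> F g ; h. *)
Definition yoneda_nat {A B : Category} (F : Functor A B) {a : Ob A} {b : Ob B}
  (h : Hom (F a) b) {x : Ob A} (g : Hom x a) : Hom (F x) b :=
  comp (fmap F g) h.

Lemma sig_eq (X : Type) (P : X -> Prop) (u v : {x : X | P x}) :
  proj1_sig u = proj1_sig v -> u = v.
Proof.
  destruct u as [u pu], v as [v pv]; simpl; intros ->.
  f_equal; apply proof_irrelevance.
Qed.

Section Refinement.
Variables (D T : Category) (t : Functor D T).

(* Objects of B^+ : pairs (P, c) with P refining A := t P and c : A -> B. *)
Definition PlusOb (B : Ob T) := { P : Ob D & Hom (t P) B }.

(* Morphisms (P1,c1) -> (P2,c2): derivations alpha of P1 =>_e P2
   (so e = t alpha) with c1 = e ; c2. *)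
Definition PlusHom (B : Ob T) (x y : PlusOb B) :=
  { a : Hom (projT1 x) (projT1 y) | comp (fmap t a) (projT2 y) = projT2 x }.
Arguments PlusHom {B} x y.

Definition plus_id (B : Ob T) (x : PlusOb B) : PlusHom x x.
Proof.
  exists (idm (projT1 x)). rewrite fmap_id. apply comp_id_l.
Defined.
Arguments plus_id {B} x.

Definition plus_comp (B : Ob T) (x y z : PlusOb B)
  (f : PlusHom x y) (g : PlusHom y z) : PlusHom x z.
Proof.
  exists (comp (proj1_sig f) (proj1_sig g)).
  rewrite fmap_comp, comp_assoc, (proj2_sig g). exact (proj2_sig f).
Defined.
Arguments plus_comp {B x y z} f g.

Definition Plus (B : Ob T) : Category.
Proof.
  refine {| Ob := PlusOb B; Hom := @PlusHom B; idm := @plus_id B;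
            comp := @plus_comp B |}.
  - intros; apply sig_eq; simpl; apply comp_id_l.
  - intros; apply sig_eq; simpl; apply comp_id_r.
  - intros; apply sig_eq; simpl; apply comp_assoc.
Defined.

Definition plus_pt (Q : Ob D) : Ob (Plus (t Q)) :=
  existT _ Q (idm (t Q)).

Definition cplus_ob (A B : Ob T) (c : Hom A B) (x : Ob (Plus A)) : Ob (Plus B) :=
  existT _ (projT1 x) (comp (projT2 x) c).
Arguments cplus_ob {A B} c x.

Definition cplus_mor (A B : Ob T) (c : Hom A B) (x y : Ob (Plus A))
  (f : Hom x y) : Hom (cplus_ob c x) (cplus_ob c y).
Proof.
  exists (proj1_sig f). simpl.
  rewrite <- comp_assoc, (proj2_sig f). reflexivity.
Defined.
Arguments cplus_mor {A B} c {x y} f.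

Definition cplus (A B : Ob T) (c : Hom A B) : Functor (Plus A) (Plus B).
Proof.
  refine {| fobj := cplus_ob c; fmap := @cplus_mor A B c |}.
  - intros; apply sig_eq; reflexivity.
  - intros; apply sig_eq; reflexivity.
Defined.
Arguments cplus {A B} c.

(* Q^+ : (B^+)^op -> Set, (P, c) |-> derivations of P =>_c Q,
   acting on morphisms by precomposition. *)
Definition qplus_map (Q : Ob D) (x y : Ob (Plus (t Q))) (f : Hom x y)
  (s : { b : Hom (projT1 y) Q | fmap t b = projT2 y })
  : { b : Hom (projT1 x) Q | fmap t b = projT2 x }.
Proof.
  exists (comp (proj1_sig f) (proj1_sig s)).
  rewrite fmap_comp, (proj2_sig s). exact (proj2_sig f).
Defined.
Arguments qplus_map Q {x y} f s.

Definition Qplus (Q : Ob D) : Presheaf (Plus (t Q)).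
Proof.
  refine {| pob := fun x : Ob (Plus (t Q)) =>
                     { b : Hom (projT1 x) Q | fmap t b = projT2 x };
            pmap := @qplus_map Q |}.
  - intros; apply sig_eq; simpl; apply comp_id_l.
  - intros; apply sig_eq; simpl; apply comp_assoc.
Defined.


(* theta_alpha : P^+ => Q^+ o (c^+)^op for alpha a derivation of P =>_c Q
   (c = t alpha), component at (P', e): beta |-> beta ; alpha. *)
Definition theta (P Q : Ob D) (alpha : Hom P Q) (x : Ob (Plus (t P)))
  (s : Qplus P x) : Qplus Q (cplus (fmap t alpha) x).
Proof.
  exists (comp (proj1_sig s) alpha). simpl.
  rewrite fmap_comp, (proj2_sig s). reflexivity.
Defined.

Definition deriv_mor (P Q : Ob D) (alpha : Hom P Q) :
  Hom (cplus (fmap t alpha) (plus_pt P)) (plus_pt Q).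
Proof.
  exists alpha. simpl. rewrite comp_id_r, comp_id_l. reflexivity.
Defined.

End Refinement.
Arguments Plus {D T} t B.
Arguments plus_pt {D T} t Q.
Arguments cplus {D T} t {A B} c.
Arguments Qplus {D T} t Q.
Arguments theta {D T t P Q} alpha x s.
Arguments deriv_mor {D T} t {P Q} alpha.


(* A morphism (P, c) -> (Q, id_B) of B^+ is a derivation beta of P => Q with
   t beta ; id_B = c, i.e. exactly an element of Q^+(P, c).  The isomorphism
   Q^+ ~ B^+(-, (Q, id_B)) is therefore the identity on underlying derivations,
   and both its naturality and its compatibility with theta_alpha reduce to
   equalities of derivations that hold on the nose (both sides are beta ; alpha). *)

Section RepresentingObject.
Variables (D T : Category) (t : Functor D T).

Definition qplus_to_yon (Q : Ob D) (x : Ob (Plus t (t Q))) (s : Qplus t Q x) :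
  yon (plus_pt t Q) x.
Proof.
  exists (proj1_sig s). simpl. rewrite comp_id_r. exact (proj2_sig s).
Defined.

Definition yon_to_qplus (Q : Ob D) (x : Ob (Plus t (t Q)))
  (f : yon (plus_pt t Q) x) : Qplus t Q x.
Proof.
  exists (proj1_sig f). pose proof (proj2_sig f) as Hf. simpl in Hf.
  rewrite comp_id_r in Hf. exact Hf.
Defined.

Definition qplus_yon_iso (Q : Ob D) : NatIso (Qplus t Q) (yon (plus_pt t Q)).
Proof.
  refine {| fwd := qplus_to_yon Q; bwd := yon_to_qplus Q |};
    intros; apply sig_eq; reflexivity.
Defined.

Lemma qplus_yon_iso_theta (P Q : Ob D) (alpha : Hom P Q)
  (x : Ob (Plus t (t P))) (g : Hom x (plus_pt t P)) :
  fwd (qplus_yon_iso Q) (cplus t (fmap t alpha) x)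
      (theta alpha x (bwd (qplus_yon_iso P) x g))
  = yoneda_nat (cplus t (fmap t alpha)) (deriv_mor t alpha) g.
Proof. apply sig_eq; reflexivity. Qed.

End RepresentingObject.

Theorem proposition3p9 (D T : Category) (t : Functor D T) :
  exists phi : forall Q : Ob D, NatIso (Qplus t Q) (yon (plus_pt t Q)),
    forall (P Q : Ob D) (alpha : Hom P Q) (x : Ob (Plus t (t P)))
           (g : Hom x (plus_pt t P)),
      fwd (phi Q) (cplus t (fmap t alpha) x)
          (theta alpha x (bwd (phi P) x g))
      = yoneda_nat (cplus t (fmap t alpha)) (deriv_mor t alpha) g.
Proof.
  exists (qplus_yon_iso D T t).
  exact (qplus_yon_iso_theta D T t).
Qed.
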